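(* Let $f$ be a biderivation of $\mathcal{SV}(0)$, and let $\phi,\psi:\mathcal{SV}(0)\to\mathcal{SV}(0)$ be linear maps and $\rho_1,\rho_2,\rho_3,\theta_1,\theta_2,\theta_3$ linear complex-valued functions on $\mathcal{SV}(0)$ such that for all $x,y$, $$f(x,y)=\sum_{i=1}^3\rho_i(x)D_i(y)+[\phi(x),y]=\sum_{i=1}^3\theta_i(y)D_i(x)+[x,\psi(y)].$$ Let $\lambda\in\mathbb{C}$ be such that $\phi(L_m)-\lambda L_m\in\mathfrak{M}$ and $\psi(L_m)-\lambda L_m\in\mathfrak{M}$ for all $m\in\mathbb{Z}$ (such $\lambda$ exists). Then for every $n\in\mathbb{Z}$ there are $c_0^{(n)},r_0^{(n)}\in\mathbb{C}$ with $$\phi(Y_n)=\lambda Y_n+c_0^{(n)}M_0,\qquad \psi(Y_n)=\lambda Y_n+r_0^{(n)}M_0,$$ and moreover $\rho_i(Y_n)=\theta_i(Y_n)=0$ for $i=1,2,3$ and $\rho_3(L_n)=\theta_3(L_n)=0$, for all $n\in\mathbb{Z}$.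
   Context: $\mathcal{SV}(0)$ is the complex Lie algebra with basis $\{L_i,Y_i,M_i\mid i\in\mathbb{Z}\}$ and brackets $[L_m,L_n]=(m-n)L_{m+n}$, $[L_m,Y_n]=(\frac12 m-n)Y_{m+n}$, $[L_m,M_n]=-nM_{m+n}$, $[Y_m,Y_n]=(m-n)M_{m+n}$, $[Y_m,M_n]=[M_m,M_n]=0$; $\mathfrak{M}=\bigoplus_{i\in\mathbb{Z}}\mathbb{C}M_i$. A biderivation of a Lie algebra $L$ is a bilinear map $f:L\times L\to L$ with $f([x,y],z)=[x,f(y,z)]+[f(x,z),y]$ and $f(x,[y,z])=[f(x,y),z]+[y,f(x,z)]$ for all $x,y,z\in L$. The linear maps $D_1,D_2,D_3$ are defined by $D_1(L_m)=M_m$, $D_1(Y_m)=D_1(M_m)=0$; $D_2(L_m)=mM_m$, $D_2(Y_m)=D_2(M_m)=0$; $D_3(L_m)=0$, $D_3(Y_m)=Y_m$, $D_3(M_m)=2M_m$. *)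

(* SV(0) is modelled as the free C-vector space on the
   basis {L_i, Y_i, M_i | i in Z}, i.e. finitely supported functions
   (gen * int) -> C, using multinomials' monalg {malg C[K]}.
   C = complex R (= R[i]) for an arbitrary real closed field R
   (the genuine complex numbers are the instance R = reals). *)
From HB Require Import structures.
From mathcomp Require Import all_boot all_order all_algebra.
From mathcomp Require Import complex.
From mathcomp Require Import finmap.
From mathcomp.multinomials Require Import monalg.
Set Implicit Arguments. Unset Strict Implicit. Unset Printing Implicit Defensive.
Import Order.TTheory GRing.Theory Num.Theory.
Local Open Scope ring_scope.

Inductive gen := GL | GY | GM.
Definition gen_code (g : gen) : nat := match g with GL => 0 | GY => 1 | GM => 2 end.
Definition gen_decode (n : nat) : option gen :=
  match n with 0 => Some GL | 1 => Some GY | 2 => Some GM | _ => None end%N.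
Lemma gen_codeK : pcancel gen_code gen_decode. Proof. by case. Qed.
HB.instance Definition _ := Countable.copy gen (pcan_type gen_codeK).

Section SV0.
Variable R : rcfType.
Local Notation C := (complex R).

Definition SVidx := (gen * int)%type.
Definition SV0 := {malg C[SVidx]}.

Definition bvec (g : gen) (i : int) : SV0 := << (g, i) >>.
Definition L (i : int) : SV0 := bvec GL i.
Definition Y (i : int) : SV0 := bvec GY i.
Definition M (i : int) : SV0 := bvec GM i.

Definition lin_ext (h : SVidx -> SV0) (x : SV0) : SV0 :=
  \sum_(k <- msupp x) x@_k *: h k.

Definition br_basis (a b : SVidx) : SV0 :=
  let m := a.2 in let n := b.2 in
  match a.1, b.1 with
  | GL, GL => (m - n)%:~R *: L (m + n)
  | GL, GY => ((m%:~R / 2%:R) - n%:~R) *: Y (m + n)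
  | GY, GL => - (((n%:~R / 2%:R) - m%:~R) *: Y (m + n))
  | GL, GM => (- n)%:~R *: M (m + n)
  | GM, GL => - ((- m)%:~R *: M (m + n))
  | GY, GY => (m - n)%:~R *: M (m + n)
  | _, _ => 0
  end.

Definition lie (x y : SV0) : SV0 :=
  \sum_(a <- msupp x) \sum_(b <- msupp y) (x@_a * y@_b) *: br_basis a b.

Definition inMM (v : SV0) : Prop := forall k, k \in msupp v -> k.1 = GM.

Definition D1 : SV0 -> SV0 :=
  lin_ext (fun k => if k.1 is GL then M k.2 else 0).
Definition D2 : SV0 -> SV0 :=
  lin_ext (fun k => if k.1 is GL then k.2%:~R *: M k.2 else 0).
Definition D3 : SV0 -> SV0 :=
  lin_ext (fun k => match k.1 with GL => 0 | GY => Y k.2 | GM => 2%:R *: M k.2 end).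

Definition is_linmap (h : SV0 -> SV0) : Prop :=
  forall (a : C) (x y : SV0), h (a *: x + y) = a *: h x + h y.
Definition is_linfun (h : SV0 -> C) : Prop :=
  forall (a : C) (x y : SV0), h (a *: x + y) = a * h x + h y.

Definition is_bilinear (f : SV0 -> SV0 -> SV0) : Prop :=
  (forall z, is_linmap (fun x => f x z)) /\ (forall x, is_linmap (f x)).
Definition is_biderivation (f : SV0 -> SV0 -> SV0) : Prop :=
  [/\ is_bilinear f,
      (forall x y z, f (lie x y) z = lie x (f y z) + lie (f x z) y) &
      (forall x y z, f x (lie y z) = lie (f x y) z + lie y (f x z))].
End SV0.

From HB Require Import structures.
From mathcomp Require Import all_boot all_order all_algebra zify.
From mathcomp Require Import complex finmap.
From mathcomp.multinomials Require Import monalg.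
Set Implicit Arguments. Unset Strict Implicit. Unset Printing Implicit Defensive.
Import Order.TTheory GRing.Theory Num.Theory.
Local Open Scope ring_scope.

(* For x = L_m, y = Y_k we have [phi L_m, Y_k] = lam (m/2 - k) Y_(m+k), as phi L_m
   lies in lam L_m + span{M_i}; comparing the coefficients of L_(m+j), M_(m+j)
   and Y_(m+j) for suitable m yields psi(Y_k) = lam Y_k + r M_0,
   theta_1(Y_k) = theta_2(Y_k) = 0 and rho_3(L_m) = 0. Exchanging x and y while
   negating phi, psi and lam gives the same identity with (rho, phi) and
   (theta, psi) interchanged, whence the symmetric statements. Finally, for
   x = Y_n, y = Y_k the coefficient of Y_p reads
   rho_3(Y_n) [k = p] = theta_3(Y_k) [n = p], because phi(Y_n) and psi(Y_k)
   have no L-components. *)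

Lemma half_subr_neq0 (F : numFieldType) (m j : int) :
  m != 2 * j -> (m%:~R / 2 - j%:~R : F) != 0.
Proof.
move=> mj; have two0 : (2 : F) != 0 by rewrite pnatr_eq0.
rewrite -[j%:~R](mulfK two0) -mulrBl mulf_eq0 invr_eq0 negb_or two0 andbT.
by rewrite -[2 : F]/(2%:~R) -intrM -intrB intr_eq0 subr_eq0 mulrC.
Qed.

Lemma exists_int_avoid2 (a b : int) : exists m : int, (m != a) && (m != b).
Proof. by case: (eqVneq a (b + 1)) => [->|ab]; [exists (b + 2) | exists (b + 1)]; lia. Qed.

Section Bracket.
Variable R : rcfType.
Local Notation C := (complex R).
Local Notation SV := (SV0 R).
Local Notation L := (L R).
Local Notation Y := (Y R).
Local Notation M := (M R).

Lemma msupp_basis (k : SVidx) : msupp (<< k >> : SV) = [fset k]%fset.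
Proof. by rewrite msuppU oner_eq0. Qed.

Lemma mcoeff_bvec g i g' p : (bvec R g i)@_(g', p) = ((g == g') && (i == p))%:R.
Proof. by rewrite /bvec mcoeffU xpair_eqE. Qed.

(* Inside SV0, a failed match of a ring lemma can make the unifier unfold basis
   vectors and brackets, which is very slow; coefficient identities are therefore
   assembled by congruence, and those for [two_sided_form] take the coefficient
   values as parameters. *)
Lemma mcoeff_form (a1 a2 a3 : C) (v1 v2 v3 w : SV) q :
  (a1 *: v1 + a2 *: v2 + a3 *: v3 + w)@_q = a1 * v1@_q + a2 * v2@_q + a3 * v3@_q + w@_q.
Proof. by rewrite 3!mcoeffD; congr (_ + _ + _ + _); apply: mcoeffZ. Qed.

Lemma mcoeff_scale2 (a b : C) (v w : SV) q :
  (a *: v + b *: w)@_q = a * v@_q + b * w@_q.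
Proof. by rewrite mcoeffD; congr (_ + _); apply: mcoeffZ. Qed.

Lemma eq_scale2_oppr (v x w : SV) (a c : C) :
  - v = (- a) *: x + (- c) *: w -> v = a *: x + c *: w.
Proof.
move=> vE; apply: oppr_inj; apply: etrans vE _; apply: etrans _ (esym (opprD _ _)).
by congr (_ + _); apply: scaleNr.
Qed.

Lemma br_basis_skew a b : br_basis R b a = - br_basis R a b.
Proof.
case: a b => [[] m] [[] n]; rewrite /br_basis /= ?(addrC n m) ?opprK ?oppr0 //.
all: by rewrite -scaleNr -rmorphN opprB.
Qed.

Lemma lie_skew (x y : SV) : lie y x = - lie x y.
Proof.
rewrite /lie exchange_big -sumrN; apply: eq_bigr => a _.
rewrite -sumrN; apply: eq_bigr => b _.
by rewrite br_basis_skew scalerN mulrC.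
Qed.

Lemma lie_oppl (x y : SV) : lie (- x) y = - lie x y.
Proof.
rewrite /lie msuppN -sumrN; apply: eq_bigr => a _.
rewrite -sumrN; apply: eq_bigr => b _.
by rewrite mcoeffN mulNr scaleNr.
Qed.

Lemma mcoeff_lie_basis (u : SV) b q :
  (lie u << b >>)@_q = \sum_(a <- msupp u) u@_a * (br_basis R a b)@_q.
Proof.
rewrite /lie raddf_sum; apply: eq_bigr => a _.
by rewrite msupp_basis big_seq_fset1 /= mcoeffZ mcoeffU eqxx mulr1.
Qed.

Lemma mcoeff_basis_lie a (v : SV) q :
  (lie << a >> v)@_q = \sum_(b <- msupp v) v@_b * (br_basis R a b)@_q.
Proof.
rewrite lie_skew mcoeffN mcoeff_lie_basis -sumrN; apply: eq_bigr => b _.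
by rewrite br_basis_skew /= mcoeffN mulrN opprK.
Qed.

Lemma sum_mcoeff_single (v : SV) (G : SVidx -> C) b0 :
  (forall b, b != b0 -> G b = 0) ->
  \sum_(b <- msupp v) v@_b * G b = v@_b0 * G b0.
Proof.
move=> G0; have [vb0 | nvb0] := boolP (b0 \in msupp v).
  rewrite (bigD1_seq b0) ?fset_uniq //= big1 ?addr0 // => b /G0 ->.
  by rewrite mulr0.
rewrite (mcoeff_outdom nvb0) mul0r big_seq big1 // => b vb.
by rewrite G0 ?mulr0 //; apply: contraNneq nvb0 => <-.
Qed.

Ltac solve_br_mcoeff ne :=
  rewrite /br_basis /= ?mcoeff0 ?mcoeffN ?mcoeffZ ?mcoeff_bvec /= ?eqxx /= ?mulr0 //;
  first [ by rewrite mulr1 mulrC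
        | by move: ne; rewrite xpair_eqE eqxx /= ?(inj_eq (addrI _)) ?(inj_eq (addIr _))
             => /negbTE ->; rewrite mulr0 ].

Lemma mcoeff_lie_LL m (v : SV) j :
  (lie (L m) v)@_(GL, m + j) = (m - j)%:~R * v@_(GL, j).
Proof.
rewrite mcoeff_basis_lie (sum_mcoeff_single _ (b0 := (GL, j))) => [|[[] i] ne];
  solve_br_mcoeff ne.
Qed.

Lemma mcoeff_lie_LY m (v : SV) j :
  (lie (L m) v)@_(GY, m + j) = (m%:~R / 2 - j%:~R) * v@_(GY, j).
Proof.
rewrite mcoeff_basis_lie (sum_mcoeff_single _ (b0 := (GY, j))) => [|[[] i] ne];
  solve_br_mcoeff ne.
Qed.

Lemma mcoeff_lie_LM m (v : SV) j :
  (lie (L m) v)@_(GM, m + j) = (- j)%:~R * v@_(GM, j).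
Proof.
rewrite mcoeff_basis_lie (sum_mcoeff_single _ (b0 := (GM, j))) => [|[[] i] ne];
  solve_br_mcoeff ne.
Qed.

Lemma mcoeff_lie_YL (u : SV) k p : (lie u (Y k))@_(GL, p) = 0.
Proof.
rewrite mcoeff_lie_basis big1 // => -[[] i] _.
all: by rewrite /br_basis /= ?mcoeff0 ?mcoeffN ?mcoeffZ ?mcoeff_bvec /= ?mulr0.
Qed.

Lemma mcoeff_lie_YY (u : SV) k j :
  (lie u (Y k))@_(GY, j + k) = (j%:~R / 2 - k%:~R) * u@_(GL, j).
Proof.
rewrite mcoeff_lie_basis (sum_mcoeff_single _ (b0 := (GL, j))) => [|[[] i] ne];
  solve_br_mcoeff ne.
Qed.

Lemma mcoeff_lie_YM (u : SV) k j :
  (lie u (Y k))@_(GM, j + k) = (j - k)%:~R * u@_(GY, j).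
Proof.
rewrite mcoeff_lie_basis (sum_mcoeff_single _ (b0 := (GY, j))) => [|[[] i] ne];
  solve_br_mcoeff ne.
Qed.

Lemma mcoeff_lie_YY_eq0 (u : SV) k p :
  (forall i, u@_(GL, i) = 0) -> (lie u (Y k))@_(GY, p) = 0.
Proof. by move=> u0; rewrite -(subrK k p) mcoeff_lie_YY u0 mulr0. Qed.

Lemma lin_ext_basis h k : lin_ext h (<< k >> : SV) = h k.
Proof. by rewrite /lin_ext msupp_basis big_seq_fset1 mcoeffU eqxx scale1r. Qed.

Lemma D1L m : D1 (L m) = M m. Proof. exact: lin_ext_basis. Qed.
Lemma D2L m : D2 (L m) = m%:~R *: M m. Proof. exact: lin_ext_basis. Qed.
Lemma D3L m : D3 (L m) = 0. Proof. exact: lin_ext_basis. Qed.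
Lemma D1Y k : D1 (Y k) = 0. Proof. exact: lin_ext_basis. Qed.
Lemma D2Y k : D2 (Y k) = 0. Proof. exact: lin_ext_basis. Qed.
Lemma D3Y k : D3 (Y k) = Y k. Proof. exact: lin_ext_basis. Qed.

Lemma inMMN (w : SV) : inMM (- w) <-> inMM w.
Proof. by rewrite /inMM msuppN. Qed.

Lemma mcoeff_near_L (u : SV) lam m g i :
  inMM (u - lam *: L m) -> g != GM -> u@_(g, i) = lam * (L m)@_(g, i).
Proof.
move=> uM gM; apply/eqP; rewrite -subr_eq0 -mcoeffZ -mcoeffB mcoeff_eq0.
by apply: contra gM => /uM <-.
Qed.

Lemma lie_near_L_Y (u : SV) lam m k : inMM (u - lam *: L m) ->
  lie u (Y k) = (lam * (m%:~R / 2 - k%:~R)) *: Y (m + k).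
Proof.
move=> uM; apply/malgP => -[g p]; rewrite mcoeffZ mcoeff_bvec -(subrK k p).
case: g; rewrite ?mcoeff_lie_YL ?mcoeff_lie_YY ?mcoeff_lie_YM //= ?mulr0 //.
  rewrite (mcoeff_near_L _ uM) // mcoeff_bvec /= (inj_eq (addIr k)) eq_sym.
  by case: eqP => [->|_]; rewrite ?mulr0 // !mulr1 mulrC.
by rewrite (mcoeff_near_L _ uM) // mcoeff_bvec /= !mulr0.
Qed.

End Bracket.

Section TwoSidedForm.
Variable R : rcfType.
Local Notation C := (complex R).
Local Notation SV := (SV0 R).
Local Notation L := (L R).
Local Notation Y := (Y R).
Local Notation M := (M R).

Definition two_sided_form (rho1 rho2 rho3 : SV -> C) (phi : SV -> SV)
    (th1 th2 th3 : SV -> C) (psi : SV -> SV) :=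
  forall x y,
    rho1 x *: D1 y + rho2 x *: D2 y + rho3 x *: D3 y + lie (phi x) y =
    th1 y *: D1 x + th2 y *: D2 x + th3 y *: D3 x + lie x (psi y).

Variables (rho1 rho2 rho3 th1 th2 th3 : SV -> C) (phi psi : SV -> SV).
Hypothesis E : two_sided_form rho1 rho2 rho3 phi th1 th2 th3 psi.

Lemma two_sided_form_sym :
  two_sided_form th1 th2 th3 (fun x => - psi x) rho1 rho2 rho3 (fun y => - phi y).
Proof.
move=> x y; rewrite lie_oppl -lie_skew (lie_skew (- phi y)) lie_oppl opprK.
exact/esym/E.
Qed.

Lemma two_sided_form_mcoeff x y q (a1 a2 a3 l b1 b2 b3 r : C) :
  (D1 y)@_q = a1 -> (D2 y)@_q = a2 -> (D3 y)@_q = a3 -> (lie (phi x) y)@_q = l ->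
  (D1 x)@_q = b1 -> (D2 x)@_q = b2 -> (D3 x)@_q = b3 -> (lie x (psi y))@_q = r ->
  rho1 x * a1 + rho2 x * a2 + rho3 x * a3 + l = th1 y * b1 + th2 y * b2 + th3 y * b3 + r.
Proof.
move=> <- <- <- <- <- <- <- <-.
apply: etrans (esym (mcoeff_form _ _ _ _ _ _ _ _)) _.
apply: etrans (congr1 (mcoeff q) (E x y)) _.
exact: mcoeff_form.
Qed.

Lemma two_sided_form_YY n k p :
  (forall i, (phi (Y n))@_(GL, i) = 0) -> (forall i, (psi (Y k))@_(GL, i) = 0) ->
  rho3 (Y n) * (k == p)%:R = th3 (Y k) * (n == p)%:R.
Proof.
move=> phiY psiY; set q := (GY, p).
have D0 i : (D1 (Y i))@_q = 0 /\ (D2 (Y i))@_q = 0 by rewrite D1Y D2Y mcoeff0.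
have [[D1k D2k] [D1n D2n]] := (D0 k, D0 n).
have D3k : (D3 (Y k))@_q = (k == p)%:R by rewrite D3Y mcoeff_bvec.
have D3n : (D3 (Y n))@_q = (n == p)%:R by rewrite D3Y mcoeff_bvec.
have psiYn : (lie (Y n) (psi (Y k)))@_q = 0.
  by rewrite lie_skew mcoeffN mcoeff_lie_YY_eq0 // oppr0.
have := two_sided_form_mcoeff D1k D2k D3k (mcoeff_lie_YY_eq0 k p phiY) D1n D2n D3n psiYn.
by rewrite !mulr0 !add0r !addr0.
Qed.

Lemma two_sided_form_rho3Y_th3Y :
  (forall k i, (phi (Y k))@_(GL, i) = 0) -> (forall k i, (psi (Y k))@_(GL, i) = 0) ->
  forall n, rho3 (Y n) = 0 /\ th3 (Y n) = 0.
Proof.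
move=> phiY psiY n; have nn1 : (n == n + 1) = false by lia.
split.
  have := two_sided_form_YY (k := n + 1) (n + 1) (phiY n) (psiY _).
  by rewrite eqxx nn1 mulr1 mulr0.
have := two_sided_form_YY (n := n + 1) (k := n) (n + 1) (phiY _) (psiY n).
by rewrite eqxx nn1 mulr1 mulr0 => /esym.
Qed.

Variable lam : C.
Hypothesis phiL : forall m, inMM (phi (L m) - lam *: L m).

Lemma two_sided_form_mcoeff_LY m k q (a c b r : C) :
  (Y k)@_q = a -> (Y (m + k))@_q = c -> (M m)@_q = b -> (lie (L m) (psi (Y k)))@_q = r ->
  rho3 (L m) * a + lam * (m%:~R / 2 - k%:~R) * c =
  (th1 (Y k) + m%:~R * th2 (Y k)) * b + r.
Proof.
move=> ea ec eb er.
have D1k : (D1 (Y k))@_q = 0 by rewrite D1Y mcoeff0.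
have D2k : (D2 (Y k))@_q = 0 by rewrite D2Y mcoeff0.
have D3k : (D3 (Y k))@_q = a by rewrite D3Y.
have el : (lie (phi (L m)) (Y k))@_q = lam * (m%:~R / 2 - k%:~R) * c.
  by rewrite (lie_near_L_Y k (@phiL m)) mcoeffZ ec.
have D1m : (D1 (L m))@_q = b by rewrite D1L.
have D2m : (D2 (L m))@_q = m%:~R * b by rewrite D2L mcoeffZ eb.
have D3m : (D3 (L m))@_q = 0 by rewrite D3L mcoeff0.
have := two_sided_form_mcoeff D1k D2k D3k el D1m D2m D3m er.
by rewrite !mulr0 !add0r addr0 mulrDl mulrCA mulrA.
Qed.

Lemma psiY_mcoeffL k j : (psi (Y k))@_(GL, j) = 0.
Proof.
have := two_sided_form_mcoeff_LY (k := k) (mcoeff_bvec _ _ _ _ _) (mcoeff_bvec _ _ _ _ _)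
  (mcoeff_bvec _ _ _ _ _) (mcoeff_lie_LL (j + 1) _ j).
rewrite /= !mulr0 add0r addrAC subrr add0r mul1r.
by move/esym.
Qed.

Lemma two_sided_form_LY_mcoeffM m k j :
  (th1 (Y k) + m%:~R * th2 (Y k)) * (m == m + j)%:R = j%:~R * (psi (Y k))@_(GM, j).
Proof.
have := two_sided_form_mcoeff_LY (k := k) (mcoeff_bvec _ _ _ _ _) (mcoeff_bvec _ _ _ _ _)
  (mcoeff_bvec _ _ _ _ _) (mcoeff_lie_LM m _ j).
rewrite /= !mulr0 addr0 => /eqP; rewrite eq_sym addr_eq0 => /eqP ->.
by rewrite -mulNr -rmorphN opprK.
Qed.

Lemma th1Y k : th1 (Y k) = 0.
Proof. by have := two_sided_form_LY_mcoeffM 0 k 0; rewrite /= !mul0r addr0 mulr1. Qed.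

Lemma th2Y k : th2 (Y k) = 0.
Proof.
by have := two_sided_form_LY_mcoeffM 1 k 0; rewrite /= th1Y add0r mul1r mulr1 mul0r.
Qed.

Lemma psiY_mcoeffM k j : j != 0 -> (psi (Y k))@_(GM, j) = 0.
Proof.
move=> j0; have := two_sided_form_LY_mcoeffM 0 k j.
rewrite th1Y th2Y mulr0 addr0 mul0r => /eqP; rewrite eq_sym mulf_eq0 intr_eq0.
by rewrite (negbTE j0) => /eqP.
Qed.

Lemma two_sided_form_LY_mcoeffY m k j :
  (m%:~R / 2 - j%:~R) * ((psi (Y k))@_(GY, j) - lam * (k == j)%:R) =
  rho3 (L m) * (k == m + j)%:R.
Proof.
have := two_sided_form_mcoeff_LY (k := k) (mcoeff_bvec _ _ _ _ _) (mcoeff_bvec _ _ _ _ _)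
  (mcoeff_bvec _ _ _ _ _) (mcoeff_lie_LY m _ j).
rewrite /= (inj_eq (addrI m)) mulr0 add0r => coefY.
rewrite mulrBr -coefY.
case: (eqVneq k j) => [->|_]; last by rewrite !mulr0 subr0 addr0.
by rewrite !mulr1 (mulrC lam) addrK.
Qed.

Lemma psiY_mcoeffY k j : (psi (Y k))@_(GY, j) = lam * (k == j)%:R.
Proof.
have [m /andP[mkj m2j]] := exists_int_avoid2 (k - j) (2 * j).
have kmj : (k == m + j) = false.
  by apply: contraNF mkj => /eqP ->; rewrite addrK.
have := two_sided_form_LY_mcoeffY m k j; rewrite kmj mulr0 => /eqP.
by rewrite mulf_eq0 (negbTE (half_subr_neq0 _ m2j)) subr_eq0 => /eqP.
Qed.

Lemma rho3L m : rho3 (L m) = 0.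
Proof.
have := two_sided_form_LY_mcoeffY m m 0.
by rewrite psiY_mcoeffY subrr mulr0 addr0 eqxx mulr1.
Qed.

Lemma psiYE k : psi (Y k) = lam *: Y k + (psi (Y k))@_(GM, 0) *: M 0.
Proof.
apply/malgP => -[g j]; apply: etrans _ (esym (mcoeff_scale2 _ _ _ _ _)).
case: g; rewrite !mcoeff_bvec /= ?mulr0 ?addr0 ?add0r.
- exact: psiY_mcoeffL.
- exact: psiY_mcoeffY.
have [->|j0] := eqVneq j 0; first by rewrite mulr1.
by rewrite psiY_mcoeffM // mulr0.
Qed.

End TwoSidedForm.

Theorem lemma3p3 (R : rcfType) (f : SV0 R -> SV0 R -> SV0 R)
  (phi psi : SV0 R -> SV0 R)
  (rho1 rho2 rho3 theta1 theta2 theta3 : SV0 R -> complex R)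
  (lam : complex R) :
  is_biderivation f ->
  is_linmap phi -> is_linmap psi ->
  is_linfun rho1 -> is_linfun rho2 -> is_linfun rho3 ->
  is_linfun theta1 -> is_linfun theta2 -> is_linfun theta3 ->
  (forall x y, f x y =
     rho1 x *: D1 y + rho2 x *: D2 y + rho3 x *: D3 y + lie (phi x) y) ->
  (forall x y, f x y =
     theta1 y *: D1 x + theta2 y *: D2 x + theta3 y *: D3 x + lie x (psi y)) ->
  (forall m : int, inMM (phi (L R m) - lam *: L R m)) ->
  (forall m : int, inMM (psi (L R m) - lam *: L R m)) ->
  forall n : int,
    (exists c r : complex R,
       phi (Y R n) = lam *: Y R n + c *: M R 0 /\
       psi (Y R n) = lam *: Y R n + r *: M R 0) /\
    [/\ rho1 (Y R n) = 0, rho2 (Y R n) = 0 & rho3 (Y R n) = 0] /\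
    [/\ theta1 (Y R n) = 0, theta2 (Y R n) = 0 & theta3 (Y R n) = 0] /\
    rho3 (L R n) = 0 /\ theta3 (L R n) = 0.
Proof.
move=> _ _ _ _ _ _ _ _ _ f_rho f_theta phiL psiL n.
have E : two_sided_form rho1 rho2 rho3 phi theta1 theta2 theta3 psi.
  by move=> x y; apply: etrans (esym (f_rho x y)) (f_theta x y).
have E' := two_sided_form_sym E.
have psiL' m : inMM (- psi (L R m) - (- lam) *: L R m).
  by rewrite scaleNr -opprD; apply/inMMN.
have phiYE k : phi (Y R k) = lam *: Y R k + (phi (Y R k))@_(GM, 0) *: M R 0.
  by have := psiYE E' psiL' k; rewrite /= mcoeffN; apply: eq_scale2_oppr.
have phiYL k i : (phi (Y R k))@_(GL, i) = 0.
  by have := psiY_mcoeffL E' psiL' k i; rewrite /= mcoeffN => /eqP; rewrite oppr_eq0 => /eqP.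
have [rho3Y th3Y] := two_sided_form_rho3Y_th3Y E phiYL (psiY_mcoeffL E phiL) n.
split.
  exists (phi (Y R n))@_(GM, 0), (psi (Y R n))@_(GM, 0).
  by split; [exact: phiYE | exact: (psiYE E phiL n)].
split; first by split; [exact: (th1Y E' psiL' n) | exact: (th2Y E' psiL' n) |].
split; first by split; [exact: (th1Y E phiL n) | exact: (th2Y E phiL n) |].
by split; [exact: (rho3L E phiL n) | exact: (rho3L E' psiL' n)].
Qed.
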